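(* Let $\Omega\subset\mathbb{R}^d$ be a bounded domain, let $c_\varepsilon:\Omega\times\Omega\to\mathbb{R}$ be a bounded measurable cost function with $\|c_\varepsilon\|_\infty=\sup_{\Omega\times\Omega}|c_\varepsilon|<\infty$, let $\mu_\star,\nu_\star$ be probability measures on $\Omega$, and for each $k\ge 0$ let $\mu_{\star,k},\nu_{\star,k}$ be probability measures on $\Omega$. Define the centered Sinkhorn iterates by $\bar\varphi_0:=0$ and, for $k\ge 0$, $$\bar\psi_k(\mathbf{y}):=-\log\int_\Omega e^{\bar\varphi_k(\mathbf{x})-c_\varepsilon(\mathbf{x},\mathbf{y})}\,\mu_{\star,k}(\mathrm{d}\mathbf{x}),$$ $$\bar\varphi_{k+1}(\mathbf{x}):=-\log\int_\Omega e^{\bar\psi_k(\mathbf{y})-c_\varepsilon(\mathbf{x},\mathbf{y})}\,\nu_{\star,k}(\mathrm{d}\mathbf{y})+\lambda_k,\qquad \lambda_k:=\int_\Omega\log\Big(\int_\Omega e^{\bar\psi_k(\mathbf{y})-c_\varepsilon(\mathbf{x},\mathbf{y})}\,\nu_{\star,k}(\mathrm{d}\mathbf{y})\Big)\mu_\star(\mathrm{d}\mathbf{x}).$$ Then for every $k\ge 0$, $$\|\bar\varphi_k\|_\infty\le 2\|c_\varepsilon\|_\infty,\qquad \|\bar\psi_k\|_\infty\le 3\|c_\varepsilon\|_\infty.$$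
   Context: The constant $\lambda_k$ is a centering constant ensuring $\int_\Omega\bar\varphi_{k+1}\,\mathrm{d}\mu_\star=0$. The measures $\mu_{\star,k},\nu_{\star,k}$ play the role of approximations of the marginals $\mu_\star,\nu_\star$ available at iteration $k$. *)

From HB Require Import structures.
From mathcomp Require Import all_boot all_order all_algebra.
From mathcomp Require Import all_classical all_reals all_analysis.
Set Implicit Arguments. Unset Strict Implicit. Unset Printing Implicit Defensive.
Import Order.TTheory GRing.Theory Num.Theory.
Import numFieldNormedType.Exports.
Local Open Scope classical_set_scope.
Local Open Scope ring_scope.

(* R^d is modelled measure-theoretically as d.-tuple R (with the product
   sigma-algebra of the library = Borel sets) and topologically through
   the identification with the normed space 'rV[R]_d. *)
Definition tuple_to_rV {R : realType} {d : nat} (x : d.-tuple R) : 'rV[R]_d :=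
  \row_i tnth x i.

Definition bounded_domain {R : realType} {d : nat} (Om : set (d.-tuple R)) : Prop :=
  let O := tuple_to_rV @` Om in
  O !=set0 /\ open O /\ connected O /\ bounded_set O.

Definition supnorm {R : realType} {T : Type} (A : set T) (f : T -> R) : \bar R :=
  ereal_sup [set (`|f x|)%:E | x in A].

Section Sinkhorn.
Context {R : realType} {dT : measure_display} {T : measurableType dT}.
Variables (Om : set T) (c : T -> T -> R).

Definition psi_of (mu : {measure set T -> \bar R}) (phi : T -> R) : T -> R :=
  fun y => - ln (fine (\int[mu]_(x in Om) (expR (phi x - c x y))%:E)%E).

Definition J_of (nu : {measure set T -> \bar R}) (psi : T -> R) : T -> R :=
  fun x => fine (\int[nu]_(y in Om) (expR (psi y - c x y))%:E)%E.

Definition lambda_of (mustar nu : {measure set T -> \bar R}) (psi : T -> R) : R :=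
  fine (\int[mustar]_(x in Om) (ln (J_of nu psi x))%:E)%E.

Definition phi_next (mustar nu : {measure set T -> \bar R}) (psi : T -> R) : T -> R :=
  fun x => - ln (J_of nu psi x) + lambda_of mustar nu psi.

Fixpoint phibar (mustar : {measure set T -> \bar R})
    (muk nuk : nat -> {measure set T -> \bar R}) (k : nat) : T -> R :=
  match k with
  | 0 => fun _ => 0
  | k'.+1 => phi_next mustar (nuk k') (psi_of (muk k') (phibar mustar muk nuk k'))
  end.

Definition psibar (mustar : {measure set T -> \bar R})
    (muk nuk : nat -> {measure set T -> \bar R}) (k : nat) : T -> R :=
  psi_of (muk k) (phibar mustar muk nuk k).

End Sinkhorn.

From HB Require Import structures.
From mathcomp Require Import all_boot all_order all_algebra.
From mathcomp Require Import all_classical all_reals all_analysis.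
From mathcomp Require Import lra.
Set Implicit Arguments. Unset Strict Implicit. Unset Printing Implicit Defensive.
Import Order.TTheory GRing.Theory Num.Theory.
Local Open Scope classical_set_scope.
Local Open Scope ring_scope.

(* With C := sup |c| on Om x Om, the bounds propagate along the iteration.
   If |phi| <= 2C, the integrand exp (phi x - c x y) defining psi lies in
   [e^-3C, e^3C], and so does its average against a probability measure,
   hence |psi| <= 3C. If |psi| <= 3C, moving x changes exp (psi y - c x y)
   by a factor at most e^2C, so J x <= e^2C J x' and ln J oscillates by at
   most 2C on Om; as lambda is the mustar-average of ln J, the next iterate
   lambda - ln J is bounded by 2C. *)

(* The iterates are not known to be measurable, so monotonicity is proved
   from the definition of the integral of a nonnegative function as a
   supremum over simple minorants, which needs no measurability. *)
Section integral_without_measurability.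
Local Open Scope ereal_scope.
Context d (T : measurableType d) (R : realType).
Variables (mu : {measure set T -> \bar R}) (D : set T) (mD : measurable D).
Import HBNNSimple.

Lemma ge0_le_integral_nonmeasurable (f g : T -> \bar R) :
  (forall x, D x -> 0 <= f x) -> (forall x, D x -> f x <= g x) ->
  \int[mu]_(x in D) f x <= \int[mu]_(x in D) g x.
Proof.
move=> f0 fg.
rewrite ge0_integralE // [leRHS]ge0_integralE; last first.
  by move=> x Dx; exact: le_trans (f0 x Dx) (fg x Dx).
apply: ge_ereal_sup => _ [h hf <-]; apply: ereal_sup_ubound.
exists h => // x; apply: le_trans (hf x) _.
by rewrite /patch; case: ifP => // /[!inE] /fg.
Qed.

Lemma ge0_integralZl_le_nonmeasurable (k : R) (f : T -> \bar R) : (0 < k)%R ->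
  (forall x, D x -> 0 <= f x) ->
  \int[mu]_(x in D) (k%:E * f x) <= k%:E * \int[mu]_(x in D) f x.
Proof.
move=> k0 f0.
rewrite ge0_integralE; last first.
  by move=> x Dx; apply: mule_ge0; [rewrite lee_fin ltW|exact: f0].
rewrite [X in _ <= _ * X]ge0_integralE //.
apply: ge_ereal_sup => _ [h hf <-].
have k1_ge0 : (0 <= k^-1)%R by rewrite invr_ge0 ltW.
have -> : sintegral mu h = k%:E * sintegral mu (scale_nnsfun h k1_ge0).
  rewrite -sintegralrM; apply: eq_sintegral => x /=.
  by rewrite mulrA mulfV ?mul1r // gt_eqF.
rewrite lee_pmul2l ?lte_fin //.
apply: ereal_sup_ubound; exists (scale_nnsfun h k1_ge0) => // x /=.
have := hf x; rewrite /patch; case: ifP => _; last first.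
  by rewrite !lee_fin; exact: mulr_ge0_le0.
case: (f x) => [r| |]; rewrite ?leey //; last by rewrite gt0_muleNy ?lte_fin // leeNy_eq.
by rewrite -EFinM !lee_fin -ler_pdivrMl // mulrC.
Qed.

Hypothesis muD1 : mu D = 1.

Lemma ge0_integral_itv (f : T -> R) (a b : R) : (0 <= a)%R ->
  (forall x, D x -> (a <= f x <= b)%R) ->
  a%:E <= \int[mu]_(x in D) (f x)%:E <= b%:E.
Proof.
move=> a0 fab.
have int_cst (r : R) : \int[mu]_(x in D) r%:E = r%:E.
  by rewrite (integral_cst mu mD r%:E) muD1 mule1.
apply/andP; split; rewrite -int_cst;
  apply: ge0_le_integral_nonmeasurable => x /fab /andP[ax xb]; rewrite lee_fin //.
exact: le_trans ax.
Qed.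

Lemma integral_itv (f : T -> R) (a b : R) :
  (forall x, D x -> (a <= f x <= b)%R) ->
  a%:E <= \int[mu]_(x in D) (f x)%:E <= b%:E.
Proof.
move=> fab; rewrite integralE.
under eq_integral do rewrite funeposE -EFin_max.
under [X in _ - X]eq_integral do rewrite funenegE -EFin_max.
set P := \int[mu]_(x in D) _; set Q := \int[mu]_(x in D) _.
have /andP[P1 P2] : (Num.max a 0)%:E <= P <= (Num.max b 0)%:E.
  apply: ge0_integral_itv => [|x /fab /andP[fa fb]]; first by rewrite le_max lexx orbT.
  by apply/andP; split; apply: le_max2.
have /andP[Q1 Q2] : (Num.max (- b) 0)%:E <= Q <= (Num.max (- a) 0)%:E.
  apply: ge0_integral_itv => [|x /fab /andP[fa fb]]; first by rewrite le_max lexx orbT.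
  by apply/andP; split; apply: le_max2; rewrite // lerN2.
move: P1 P2 Q1 Q2; case: P => [p| |]; case: Q => [q| |] //=.
rewrite -EFinB !lee_fin !ge_max !le_max => /andP[? ?] /orP P2 /andP[? ?] /orP Q2.
by apply/andP; split; case: P2 => ?; case: Q2 => ?; lra.
Qed.

Lemma integral_itv_fin_num (f : T -> R) (a b : R) :
  (forall x, D x -> (a <= f x <= b)%R) ->
  \int[mu]_(x in D) (f x)%:E \is a fin_num.
Proof.
move=> /integral_itv/andP[aI Ib].
by rewrite fin_numElt (lt_le_trans (ltNyr a) aI) (le_lt_trans Ib (ltry b)).
Qed.

Lemma fine_integral_itv (f : T -> R) (a b : R) :
  (forall x, D x -> (a <= f x <= b)%R) ->
  (a <= fine (\int[mu]_(x in D) (f x)%:E) <= b)%R.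
Proof.
move=> fab; have := integral_itv fab.
by rewrite -(fineK (integral_itv_fin_num fab)) !lee_fin.
Qed.

End integral_without_measurability.

Lemma normr_ln_le {R : realType} (M t : R) :
  expR (- M) <= t <= expR M -> `|ln t| <= M.
Proof.
move=> /andP[Mt tM]; have t_gt0 : 0 < t by exact: lt_le_trans (expR_gt0 _) Mt.
rewrite ler_norml -[X in X <= _ <= _](expRK (- M)) -[X in _ <= _ <= X](expRK M).
by rewrite !ler_ln ?posrE ?expR_gt0 ?Mt.
Qed.

Lemma le_supnorm {R : realType} {T : Type} (A : set T) (f : T -> R) x :
  A x -> ((`|f x|)%:E <= supnorm A f)%E.
Proof. by move=> Ax; apply: ereal_sup_ubound; exists x. Qed.

Lemma supnorm_le {R : realType} {T : Type} (A : set T) (f : T -> R) (M : R) :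
  (forall x, A x -> `|f x| <= M) -> (supnorm A f <= M%:E)%E.
Proof. by move=> fM; apply: ge_ereal_sup => _ [x Ax <-]; rewrite lee_fin fM. Qed.

Section sinkhorn_bounds.
Context {R : realType} {dT : measure_display} {T : measurableType dT}.
Variables (Om : set T) (c : T -> T -> R) (C : R).
Hypothesis mOm : measurable Om.
Hypothesis c_le : forall x y, Om x -> Om y -> `|c x y| <= C.

Lemma psi_of_le (mu : {measure set T -> \bar R}) (phi : T -> R) :
  mu Om = 1%E -> (forall x, Om x -> `|phi x| <= 2 * C) ->
  forall y, Om y -> `|psi_of Om c mu phi y| <= 3 * C.
Proof.
move=> mu1 phi_le y Oy; rewrite normrN; apply: normr_ln_le.
apply: (fine_integral_itv mOm mu1) => x Ox; rewrite !ler_expR.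
have := phi_le x Ox; have := c_le Ox Oy.
by rewrite !ler_norml => /andP[? ?] /andP[? ?]; apply/andP; split; lra.
Qed.

Section phi_next.
Variables (nu : {measure set T -> \bar R}) (psi : T -> R).
Hypothesis nu1 : nu Om = 1%E.
Hypothesis psi_le : forall y, Om y -> `|psi y| <= 3 * C.

Let integrand_itv x : Om x -> forall y, Om y ->
  expR (- (4 * C)) <= expR (psi y - c x y) <= expR (4 * C).
Proof.
move=> Ox y Oy; rewrite !ler_expR.
have := psi_le Oy; have := c_le Ox Oy.
by rewrite !ler_norml => /andP[? ?] /andP[? ?]; apply/andP; split; lra.
Qed.

Lemma J_ofE x : Om x ->
  (\int[nu]_(y in Om) (expR (psi y - c x y))%:E)%E = (J_of Om c nu psi x)%:E.
Proof.
by move=> Ox; rewrite fineK // (integral_itv_fin_num mOm nu1 (integrand_itv Ox)).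
Qed.

Lemma J_of_gt0 x : Om x -> 0 < J_of Om c nu psi x.
Proof.
move=> Ox; have /andP[+ _] := fine_integral_itv mOm nu1 (integrand_itv Ox).
exact: lt_le_trans (expR_gt0 _).
Qed.

Lemma J_of_le_expR_mul x x' : Om x -> Om x' ->
  J_of Om c nu psi x <= expR (2 * C) * J_of Om c nu psi x'.
Proof.
move=> Ox Ox'; rewrite -lee_fin EFinM -J_ofE // -J_ofE //.
apply: le_trans (ge0_integralZl_le_nonmeasurable _ (expR_gt0 (2 * C)) _); last first.
  by move=> y _; rewrite lee_fin expR_ge0.
apply: ge0_le_integral_nonmeasurable => [y _|y Oy]; first by rewrite lee_fin expR_ge0.
rewrite -EFinM lee_fin -expRD ler_expR.
have := c_le Ox Oy; have := c_le Ox' Oy.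
by rewrite !ler_norml => /andP[? ?] /andP[? ?]; lra.
Qed.

Lemma ln_J_of_le x x' : Om x -> Om x' ->
  ln (J_of Om c nu psi x) <= 2 * C + ln (J_of Om c nu psi x').
Proof.
move=> Ox Ox'; rewrite -[X in X + _]expRK -lnM ?posrE ?expR_gt0 ?J_of_gt0 //.
by rewrite ler_ln ?posrE ?mulr_gt0 ?expR_gt0 ?J_of_gt0 ?J_of_le_expR_mul.
Qed.

Lemma phi_next_le (mustar : {measure set T -> \bar R}) x :
  mustar Om = 1%E -> Om x -> `|phi_next Om c mustar nu psi x| <= 2 * C.
Proof.
move=> mustar1 Ox; rewrite /phi_next /lambda_of.
have /andP[? ?] : ln (J_of Om c nu psi x) - 2 * C <=
    fine (\int[mustar]_(x' in Om) (ln (J_of Om c nu psi x'))%:E) <=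
    ln (J_of Om c nu psi x) + 2 * C.
  apply: (fine_integral_itv mOm mustar1) => x' Ox'.
  move: (ln_J_of_le Ox Ox') (ln_J_of_le Ox' Ox) => ? ?.
  by apply/andP; split; lra.
by rewrite ler_norml; apply/andP; split; lra.
Qed.

End phi_next.

Variable mustar : {measure set T -> \bar R}.
Variables muk nuk : nat -> {measure set T -> \bar R}.
Hypotheses (mustar1 : mustar Om = 1%E) (muk1 : forall k, muk k Om = 1%E)
  (nuk1 : forall k, nuk k Om = 1%E).

Lemma phibar_le k x : 0 <= C -> Om x -> `|phibar Om c mustar muk nuk k x| <= 2 * C.
Proof.
move=> C_ge0; elim: k x => [x _|k IHk x Ox]; first by rewrite normr0 mulr_ge0.
exact/phi_next_le/Ox/mustar1/psi_of_le/IHk/muk1.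
Qed.

Lemma psibar_le k y : 0 <= C -> Om y -> `|psibar Om c mustar muk nuk k y| <= 3 * C.
Proof. by move=> C_ge0; apply: psi_of_le => // x; exact: phibar_le. Qed.

End sinkhorn_bounds.

Theorem mainTheorem1 (R : realType) (d : nat) (Om : set (d.-tuple R))
  (c : d.-tuple R -> d.-tuple R -> R)
  (mustar nustar : probability (d.-tuple R) R)
  (muk nuk : nat -> probability (d.-tuple R) R) :
  bounded_domain Om ->
  measurable Om ->
  measurable_fun (Om `*` Om) (fun z : d.-tuple R * d.-tuple R => c z.1 z.2) ->
  (supnorm (Om `*` Om) (fun z : d.-tuple R * d.-tuple R => c z.1 z.2) < +oo)%E ->
  mustar Om = 1%E -> nustar Om = 1%E ->
  (forall k, muk k Om = 1%E) -> (forall k, nuk k Om = 1%E) ->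
  forall k : nat,
    (supnorm Om (phibar Om c mustar (fun n => muk n) (fun n => nuk n) k)
       <= 2%:E * supnorm (Om `*` Om) (fun z => c z.1 z.2))%E /\
    (supnorm Om (psibar Om c mustar (fun n => muk n) (fun n => nuk n) k)
       <= 3%:E * supnorm (Om `*` Om) (fun z => c z.1 z.2))%E.
Proof.
(* Neither the measurability of c nor nustar enters the bounds. *)
move=> [[_ [x0 Ox0 _]] _] mOm _ c_fin mustar1 _ muk1 nuk1 k.
set S := supnorm (Om `*` Om) _.
have c_le_S x y : Om x -> Om y -> ((`|c x y|)%:E <= S)%E.
  by move=> Ox Oy; exact: (@le_supnorm _ _ (Om `*` Om) _ (x, y)).
have S_ge0 : (0 <= S)%E by apply: le_trans (c_le_S _ _ Ox0 Ox0).
have [C SC] : exists C, S = C%:E by exists (fine S); rewrite fineK // ge0_fin_numE.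
have C_ge0 : 0 <= C by rewrite -lee_fin -SC.
have c_le x y : Om x -> Om y -> `|c x y| <= C.
  by move=> Ox Oy; rewrite -lee_fin -SC; exact: c_le_S.
rewrite SC -!EFinM; split; apply: supnorm_le => x Ox.
- exact: phibar_le.
- exact: psibar_le.
Qed.
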